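(* Let $\mathcal{A}^{(+)}$ be the graded unital associative $\mathbb{C}$-algebra generated by $\nabla_0,\nabla_1,\nabla_2,\nabla_3$ in degree $1$ with relations $[\nabla_0,\nabla_k]=[\nabla_\ell,\nabla_m]$ for every cyclic permutation $(k,\ell,m)$ of $(1,2,3)$. Then $\mathcal{A}^{(+)}$ has exponential growth and is not Gorenstein.
   Context: $\mathcal{A}^{(+)}$ is a quadratic algebra $T(E)/(R)$ with $E=\bigoplus_\lambda\mathbb{C}\nabla_\lambda$; its quadratic dual is $\mathcal{A}^{(+)!}=T(E^* )/(R^\perp)$. Its Koszul complex is the complex of free left modules $\mathcal{A}^{(+)}\otimes(\mathcal{A}^{(+)!}_n)^*$ with differential induced by $a\otimes(e_0\otimes\cdots\otimes e_n)\mapsto ae_0\otimes(e_1\otimes\cdots\otimes e_n)$. If this complex has finite length $D$, $\mathcal{A}^{(+)}$ is called Gorenstein if the cochain complex of right modules obtained by applying $\mathrm{Hom}_{\mathcal{A}^{(+)}}(-,\mathcal{A}^{(+)})$ termwise has cohomology $0$ in degrees $<D$ and isomorphic to the trivial right module $\mathbb{C}$ in degree $D$. Exponential growth means $\dim\mathcal{A}^{(+)}_n$ grows exponentially in $n$. *)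

(* Quadratic algebras T(E)/(R), E = K^m with basis
   nabla_0..nabla_{m-1}, encoded degree-wise by finite linear algebra. *)
From HB Require Import structures.
From mathcomp Require Import all_boot all_order all_algebra.
From mathcomp Require Import complex Rstruct.
Set Implicit Arguments. Unset Strict Implicit. Unset Printing Implicit Defensive.
Import Order.TTheory GRing.Theory Num.Theory.
Local Open Scope ring_scope.

Definition CC : fieldType := complex Rdefinitions.R.

Section QuadraticAlgebra.
Variables (K : fieldType) (m : nat).

(* words of length n in the generators; the tensor power E^{(x) n} has
   basis the words, so it is the space of K-valued functions on words. *)
Definition word n := n.-tuple 'I_m.
Definition tens n := {ffun word n -> K^o}.

Definition ev n (w : word n) : tens n := [ffun u => (u == w)%:R].

Definition coef2 (r : tens 2) (s : seq 'I_m) : K :=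
  if insub s is Some t then r t else 0.

(* u (x) r (x) v, where u is a word of length i, v the rest of the context *)
Definition relvec n (i : nat) (c : seq 'I_m) (r : tens 2) : tens n :=
  [ffun w : word n => ((take i w ++ drop i.+2 w) == c)%:R *
                      coef2 r (take 2 (drop i w))].

Variable R : {vspace tens 2}.

(* E^{(x) i} (x) R (x) E^{(x) (n-2-i)} inside E^{(x) n}, for i + 2 <= n *)
Definition Rat n (i : nat) : {vspace tens n} :=
  <<[seq relvec n i (take i w ++ drop i.+2 w) r
       | w : word n <- enum (predT : pred (word n)), r <- (vbasis R : seq (tens 2))]>>%VS.

(* degree-n component of the two-sided ideal (R) *)
Definition Ideal n : {vspace tens n} := (\sum_(i < n.-1) Rat n i)%VS.

Definition dimA n : nat := (\dim (fullv : {vspace tens n}) - \dim (Ideal n))%N.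

(* (A^!_n)^* = intersection of the E^i (x) R (x) E^(n-2-i) (= E^{(x)n} for n<=1) *)
Definition Wsp n : {vspace tens n} := (\bigcap_(i < n.-1) Rat n i)%VS.

Definition lmul j (a : 'I_m) (y : tens j) : tens j.+1 :=
  \sum_(u : word j) y u *: ev [tuple of a :: u].
Definition rmul j (b : 'I_m) (y : tens j) : tens j.+1 :=
  \sum_(u : word j) y u *: ev [tuple of rcons u b].
Definition slice n (a : 'I_m) (x : tens n.+1) : tens n :=
  [ffun w : word n => x [tuple of a :: w]].

(* Cochains C^n_j = Hom_A(A (x) W_n, A)_j = Hom_K(W_n, A_j), represented as
   Hom_K(E^{(x)n}, E^{(x)j}) modulo N n j = {phi | phi(W_n) <= (R)_j}. *)
Notation Hm n j := 'Hom(tens n, tens j).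

Definition qmap n j : 'Hom(Hm n j, Hm n j) :=
  linfun (fun phi : Hm n j =>
    ((\1 - projv (Ideal j)) \o phi \o projv (Wsp n))%VF).

Definition Nsp n j : {vspace Hm n j} := lker (qmap n j).

(* Hom of the Koszul differential a (x) (e_0 (x) ... (x) e_n) |-> a e_0 (x) (e_1 ...):
   (d phi)(x) = sum_a nabla_a phi(x_a) *)
Definition dK n j (phi : Hm n j) : Hm n.+1 j.+1 :=
  linfun (fun x : tens n.+1 => \sum_(a : 'I_m) lmul a (phi (slice a x))).

(* right A-module action of nabla_b on cochains: (phi . nabla_b)(x) = phi(x) nabla_b *)
Definition ract n j (b : 'I_m) (phi : Hm n j) : Hm n j.+1 :=
  (linfun (@rmul j b) \o phi)%VF.

(* cocycles (lifted to Hm n j) *)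
Definition Zsp n j : {vspace Hm n j} :=
  lker (qmap n.+1 j.+1 \o linfun (@dK n j))%VF.

(* coboundaries (lifted, containing Nsp) *)
Definition Bsp n j : {vspace Hm n j} :=
  match n, j return {vspace Hm n j} with
  | n'.+1, j'.+1 => (limg (linfun (@dK n' j')) + Nsp n'.+1 j'.+1)%VS
  | n', j' => Nsp n' j'
  end.

(* dim_K of the internal-degree-j part of H^n(Hom_A(K(A), A)) *)
Definition cohdim n j : nat := (\dim (Zsp n j) - \dim (Bsp n j))%N.

Definition koszul_length (D : nat) : Prop :=
  Wsp D != 0%VS /\ forall n, (D < n)%N -> Wsp n = 0%VS.

(* H^D is isomorphic to the trivial right module K: it is one-dimensional over K
   (H^D = (+)_j H^D_j) and every generator nabla_b acts by zero. *)
Definition coh_trivial_module (D : nat) : Prop :=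
  (exists j0, cohdim D j0 = 1%N /\ forall j, j != j0 -> cohdim D j = 0%N) /\
  (forall (b : 'I_m) j (phi : Hm D j), phi \in Zsp D j -> ract b phi \in Bsp D j.+1).

Definition Gorenstein : Prop :=
  exists D, koszul_length D /\
    (forall n j, (n < D)%N -> cohdim n j = 0%N) /\
    coh_trivial_module D.

End QuadraticAlgebra.

Definition exponential_growth (d : nat -> nat) : Prop :=
  exists c : rat, 1 < c /\ exists N : nat, forall n, (N <= n)%N -> c ^+ n <= (d n)%:R.

Definition nab (i : nat) : 'I_4 := inord i.
Definition mon2 (a b : nat) : tens CC 4 2 := @ev CC 4 2 [tuple nab a; nab b].
Definition comm_rel (k l m : nat) : tens CC 4 2 :=
  mon2 0 k - mon2 k 0 - (mon2 l m - mon2 m l).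
Definition Rplus : {vspace tens CC 4 2} :=
  <<[:: comm_rel 1 2 3; comm_rel 2 3 1; comm_rel 3 1 2]>>%VS.

(* Growth: nabla_0 |-> x, nabla_1 |-> y, nabla_2 |-> i x, nabla_3 |-> -i y sends every
   relation [nabla_0, nabla_k] - [nabla_l, nabla_m] to 0 in the free algebra C<x, y>
   (as (i x)(-i y) = x y), so A^(+) maps onto C<x, y> and dim A_n >= 2^n.
   Not Gorenstein: every r in R vanishes on the diagonal and is determined by any one
   of its rows.  If x lies in (R (x) E) /\ (E (x) R), each slice x(a, -, -) is in R
   and has vanishing row a, so x = 0.  Hence W_3 = 0, and H^2 in internal degree 0
   is Hom(W_2, C), of dimension >= dim R = 3.  But W_1, W_2 <> 0 forces D >= 2, and
   then H^2 must vanish (D > 2) or be one-dimensional (D = 2). *)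

From Pilot Require Import Defs.
From HB Require Import structures.
From mathcomp Require Import all_boot all_order all_algebra.
From mathcomp Require Import complex Rstruct ring zify.
Set Implicit Arguments. Unset Strict Implicit. Unset Printing Implicit Defensive.
Import Order.TTheory GRing.Theory Num.Theory.
Local Open Scope ring_scope.

Lemma linfun_linearE (K : fieldType) (aT rT : vectType K) (f : aT -> rT) :
  linear f -> forall x, linfun f x = f x.
Proof.
move=> lin_f x; pose fL : {linear aT -> rT} := HB.pack f (GRing.isLinear.Build _ _ _ _ f lin_f).
exact: (lfunE fL).
Qed.

Lemma span_ind (K : fieldType) (vT : vectType K) (s : seq vT) (P : vT -> Prop) :
  P 0 -> (forall x y, P x -> P y -> P (x + y)) -> (forall k x, P x -> P (k *: x)) ->
  {in s, forall v, P v} -> forall x, x \in <<s>>%VS -> P x.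
Proof.
move=> P0 PD PZ Ps x /(@coord_span _ _ _ (in_tuple s)) ->.
by elim/big_ind: _ => // i _; apply/PZ/Ps/mem_nth.
Qed.

Section Tensors.
Variables (K : fieldType) (m n : nat).

Lemma sum_mul_ev (F : word m n -> K) (w : word m n) :
  \sum_(t : word m n) F t * ev K w t = F w.
Proof.
rewrite (bigD1 w) //= ffunE eqxx mulr1 big1 ?addr0 // => t.
by rewrite ffunE => /negbTE ->; rewrite mulr0.
Qed.

Lemma span3E (u v w x : tens K m n) : x \in <<[:: u; v; w]>>%VS ->
  exists a b c, forall t, x t = a * u t + b * v t + c * w t.
Proof.
move=> /(@coord_span _ _ _ (in_tuple _)) ->.
by eexists; eexists; eexists => t; rewrite !big_ord_recl big_ord0 !ffunE addr0 addrA.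
Qed.

Lemma span3_coord_eq0 (u v w x : tens K m n) t :
  x \in <<[:: u; v; w]>>%VS -> u t = 0 -> v t = 0 -> w t = 0 -> x t = 0.
Proof. by case/span3E=> a [b [c ->]] -> -> ->; rewrite !mulr0 !addr0. Qed.

Section DualWords.
Variables (u v w : tens K m n) (tu tv tw : word m n).
Hypotheses (u_tu : u tu != 0) (v_tv : v tv != 0) (w_tw : w tw != 0).
Hypotheses (v_tu : v tu = 0) (w_tu : w tu = 0) (u_tv : u tv = 0).
Hypotheses (w_tv : w tv = 0) (u_tw : u tw = 0) (v_tw : v tw = 0).

Lemma dual_coords_eq0 a b c :
    (forall t, t \in [:: tu; tv; tw] -> a * u t + b * v t + c * w t = 0) ->
  [/\ a = 0, b = 0 & c = 0].
Proof.
move=> comb_eq0; have := comb_eq0 tu; have := comb_eq0 tv; have := comb_eq0 tw.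
rewrite !inE !eqxx ?orbT; rewrite v_tu w_tu u_tv w_tv u_tw v_tw !mulr0 !addr0 !add0r.
move=> /(_ isT)/eqP; rewrite mulf_eq0 (negbTE w_tw) orbF => /eqP c0.
move=> /(_ isT)/eqP; rewrite mulf_eq0 (negbTE v_tv) orbF => /eqP b0.
by move=> /(_ isT)/eqP; rewrite mulf_eq0 (negbTE u_tu) orbF => /eqP a0.
Qed.

Lemma span3_eq0 x : x \in <<[:: u; v; w]>>%VS ->
  x tu = 0 -> x tv = 0 -> x tw = 0 -> x = 0.
Proof.
case/span3E=> a [b [c x_eq]] x_tu x_tv x_tw.
case: (dual_coords_eq0 (a := a) (b := b) (c := c)) => [t | a0 b0 c0].
  by rewrite !inE -x_eq => /or3P[] /eqP ->.
by apply/ffunP => t; rewrite x_eq a0 b0 c0 ffunE !mul0r !addr0.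
Qed.

Lemma span3_free : free [:: u; v; w].
Proof.
apply/freeP => k; rewrite !big_ord_recl big_ord0 addr0 addrA /= => sum_eq0.
case: (dual_coords_eq0 (a := k ord0) (b := k (lift ord0 ord0))
    (c := k (lift ord0 (lift ord0 ord0)))) => [t _ | k0 k1 k2].
  by have := congr1 (fun f : tens K m n => f t) sum_eq0; rewrite !ffunE.
by case=> [[|[|[|//]]] lt_i]; [rewrite -k0 | rewrite -k1 | rewrite -k2]; congr k; apply: val_inj.
Qed.

End DualWords.
End Tensors.

Section QuadraticKoszul.
Variables (K : fieldType) (m : nat) (R : {vspace tens K m 2}).

Lemma dim_tens n : \dim (fullv : {vspace tens K m n}) = (m ^ n)%N.
Proof.
rewrite dimvf; change (#|{: word m n}| * 1 = m ^ n)%N.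
by rewrite card_tuple card_ord muln1.
Qed.

Lemma Ideal0 : Ideal R 0 = 0%VS.
Proof. by rewrite /Ideal big_ord0. Qed.

Lemma Wsp1 : Wsp R 1 = fullv.
Proof. by rewrite /Wsp big_ord0. Qed.

Lemma Wsp_sub_Rat n (i : 'I_n.-1) : (Wsp R n <= Defs.Rat R n i)%VS.
Proof. exact: bigcapv_inf. Qed.

Lemma coef2_tuple (r : tens K m 2) (t : word m 2) : coef2 r t = r t.
Proof. by rewrite /coef2 valK. Qed.

Lemma relvec2 (r : tens K m 2) : relvec 2 0 [::] r = r.
Proof.
apply/ffunP => t; rewrite ffunE take0 drop0 (drop_oversize (n := 2)) ?size_tuple //.
by rewrite (take_oversize (n := 2)) ?size_tuple // coef2_tuple mul1r.
Qed.

Lemma sub_Wsp2 : (R <= Wsp R 2)%VS.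
Proof.
rewrite /Wsp big_ord1 -{1}(span_basis (vbasisP R)); apply/span_subvP => r r_basis.
have [w _ | no_word] := pickP (predT : pred (word m 2)); last first.
  have -> : r = 0 by apply/ffunP => t; have := no_word t.
  exact: mem0v.
apply: memv_span; apply/allpairsP; exists (w, r); split; rewrite ?mem_enum //=.
by rewrite take0 drop_oversize ?size_tuple // relvec2.
Qed.

Lemma Rat30_diag (a c : 'I_m) x : (forall r, r \in R -> r [tuple a; a] = 0) ->
  x \in Defs.Rat R 3 0 -> x [tuple a; a; c] = 0.
Proof.
move=> R_diag; move: x; apply: span_ind => [|x y|k x|v]; rewrite ?ffunE //.
- by move=> -> ->; rewrite addr0.
- by move=> ->; rewrite scaler0.
case/allpairsP=> [[w r] [_ /vbasis_mem r_in_R ->]].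
by rewrite ffunE /= coef2_tuple R_diag ?mulr0.
Qed.

Lemma slice_Rat31 (a : 'I_m) x : x \in Defs.Rat R 3 1 -> slice a x \in R.
Proof.
move: x; apply: span_ind => [|x y|k x|v].
- by rewrite (_ : slice a 0 = 0) ?mem0v //; apply/ffunP => t; rewrite !ffunE.
- rewrite (_ : slice a (x + y) = slice a x + slice a y); first exact: memvD.
  by apply/ffunP => t; rewrite !ffunE.
- rewrite (_ : slice a (k *: x) = k *: slice a x); first exact: memvZ.
  by apply/ffunP => t; rewrite !ffunE.
case/allpairsP=> [[w r] [_ /vbasis_mem r_in_R ->]] /=.
rewrite (_ : slice _ _ = ([:: a] == take 1 w ++ drop 3 w)%:R *: r); first exact: memvZ.
apply/ffunP => t; rewrite !ffunE /= take0 drop0 (drop_oversize (n := 2)) ?size_tuple //.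
by rewrite (take_oversize (n := 2)) ?size_tuple // coef2_tuple.
Qed.

Lemma Wsp3_eq0 :
    (forall r a, r \in R -> r [tuple a; a] = 0) ->
    (forall r a, r \in R -> (forall c, r [tuple a; c] = 0) -> r = 0) ->
  Wsp R 3 = 0%VS.
Proof.
move=> R_diag R_row; apply/vspaceP => x; rewrite memv0; apply/idP/eqP => [W3x|->]; last first.
  exact: mem0v.
have slice0 a : slice a x = 0.
  apply: (R_row _ a (slice_Rat31 a (subvP (@Wsp_sub_Rat 3 (@Ordinal 2 1 isT)) _ W3x))) => c.
  rewrite ffunE; apply: Rat30_diag (subvP (@Wsp_sub_Rat 3 ord0) _ W3x).
  by move=> r /R_diag.
apply/ffunP => w; rewrite (tuple_eta w) ffunE.
by have := congr1 (fun y : tens K m 2 => y [tuple of behead w]) (slice0 (thead w)); rewrite !ffunE.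
Qed.

Lemma qmapE n j phi : qmap R n j phi =
  ((\1 - projv (Ideal R j)) \o phi \o projv (Wsp R n))%VF.
Proof.
rewrite linfun_linearE // => k x y.
by rewrite comp_lfunDr comp_lfunDl -comp_lfunZr -comp_lfunZl.
Qed.

Lemma projv0 (vT : vectType K) (u : vT) : projv 0%VS u = 0.
Proof. by apply/eqP; rewrite -memv0 memv_proj. Qed.

Lemma Zsp_full n j : Wsp R n.+1 = 0%VS -> Zsp R n j = fullv.
Proof.
move=> W_eq0; apply/vspaceP => phi; rewrite memvf memv_ker comp_lfunE qmapE W_eq0.
by apply/eqP/lfunP => u; rewrite !comp_lfunE projv0 !linear0 zero_lfunE.
Qed.

Lemma dim_Wsp_le_cohdim n : Wsp R n.+1 = 0%VS -> (\dim (Wsp R n) <= cohdim R n 0)%N.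
Proof.
move=> W_eq0; set W := Wsp R n; set q := qmap R n 0.
have -> : cohdim R n 0 = \dim (limg q).
  have := limg_ker_dim q fullv; rewrite capfv.
  (* [Bsp] is defined by matching on [n] before [j] *)
  rewrite /cohdim Zsp_full // (_ : Bsp R n 0 = Nsp R n 0); last by case: n W_eq0 @W @q.
  by rewrite /Nsp -/q => <-; rewrite addKn.
(* Restriction to [W] maps the image of [q] onto the whole of [Hom(W, K)]. *)
pose restr : 'Hom('Hom(tens K m n, tens K m 0), 'Hom(subvs_of W, tens K m 0)) :=
  linfun (fun phi : 'Hom(tens K m n, tens K m 0) => (phi \o linfun vsval)%VF).
have restr_onto : limg (restr \o q) = fullv.
  apply/vspaceP => psi; rewrite memvf; apply/memv_imgP.
  exists (psi \o linfun (vsproj W))%VF; rewrite ?memvf //.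
  apply/lfunP => u; rewrite comp_lfunE qmapE Ideal0 linfun_linearE => [|k x y].
    rewrite !comp_lfunE !lfunE /= projv_id ?subvsP //= vsvalK.
    by rewrite id_lfunE opp_lfunE projv0 oppr0 addr0.
  by rewrite comp_lfunDl comp_lfunZl.
have dim_Hom : \dim (fullv : {vspace 'Hom(subvs_of W, tens K m 0)}) = \dim W.
  rewrite dimvf; change (dim (subvs_of W) * dim (tens K m 0) = \dim W)%N.
  by rewrite -(dimvf (tens K m 0)) dim_tens muln1.
have := limg_ker_dim restr (limg q).
by rewrite -limg_comp restr_onto dim_Hom; lia.
Qed.

Lemma not_Gorenstein_of_Wsp3_eq0 : Wsp R 3 = 0%VS -> (1 < \dim R)%N -> ~ Gorenstein R.
Proof.
move=> W3_eq0 dimR [D [[_ W_gt] [coh_lt [[j0 [coh_j0 coh_j]] _]]]].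
have coh2 : (1 < cohdim R 2 0)%N.
  exact: leq_trans dimR (leq_trans (dimvS sub_Wsp2) (dim_Wsp_le_cohdim W3_eq0)).
case: D => [|[|[|D]]] in W_gt coh_lt coh_j0 coh_j *.
- have := dim_tens 1; rewrite -Wsp1 W_gt // dimv0 expn1 => m_eq0.
  have m2_eq0 : (m ^ 2 = 0)%N by rewrite -m_eq0.
  by have := dimvS (subvf R); rewrite dim_tens m2_eq0; lia.
- by have := dimvS sub_Wsp2; rewrite W_gt // dimv0; lia.
- have [j0_eq0 | j0_neq0] := eqVneq j0 0%N.
    by rewrite j0_eq0 in coh_j0; rewrite coh_j0 in coh2.
  by rewrite coh_j 1?eq_sym in coh2.
- by rewrite coh_lt in coh2.
Qed.

End QuadraticKoszul.

Lemma cat_take_mid_drop (T : Type) (s : seq T) i :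
  take i s ++ take 2 (drop i s) ++ drop i.+2 s = s.
Proof. by rewrite -(add2n i) -drop_drop !cat_take_drop. Qed.

Section TensorPowerMap.
Variables (K : fieldType) (m p : nat) (M : 'I_m -> 'I_p -> K).

Lemma sum_words_context n i (c : seq 'I_m) (G : seq 'I_m -> K) :
  (i.+2 <= n)%N -> size c = (n - 2)%N ->
  \sum_(w : word m n) ((take i w ++ drop i.+2 w) == c)%:R * G (take 2 (drop i w)) =
  \sum_(t : word m 2) G t.
Proof.
move=> le_i_n size_c; have le_i_c : (i <= size c)%N by rewrite size_c; lia.
have size_ins (t : word m 2) : size (take i c ++ t ++ drop i c) == n.
  by rewrite !size_cat size_takel // size_drop size_tuple; apply/eqP; lia.
pose ins (t : word m 2) : word m n := Tuple (size_ins t).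
have ctx_ins t : take i (ins t) ++ drop i.+2 (ins t) = c.
  rewrite /= take_size_cat ?size_takel // catA drop_size_cat ?cat_take_drop //.
  by rewrite size_cat size_takel // size_tuple addn2.
have mid_ins t : take 2 (drop i (ins t)) = t.
  by rewrite /= drop_size_cat ?size_takel // take_size_cat ?size_tuple.
have ins_inj : injective ins.
  by move=> t t' /(congr1 (fun w : word m n => take 2 (drop i w))); rewrite !mid_ins => /val_inj.
have ctx_imset (w : word m n) : (take i w ++ drop i.+2 w == c) = (w \in ins @: setT).
  apply/eqP/imsetP => [ctx_w | [t _ ->]]; last exact: ctx_ins.
  have size_mid : size (take 2 (drop i w)) == 2%N.
    by rewrite size_takel // size_drop size_tuple; lia.
  exists (Tuple size_mid) => //; apply: val_inj.
  rewrite /= -{1}(cat_take_mid_drop w i) -ctx_w take_size_cat ?size_takel ?size_tuple //; try lia.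
  by rewrite drop_size_cat ?size_takel ?size_tuple //; lia.
under eq_bigr => w _ do rewrite ctx_imset mulr_natl mulrb.
rewrite -big_mkcond big_imset /= => [|t t' _ _]; last exact: ins_inj.
rewrite (eq_bigl predT) => [|t]; last by rewrite in_setT.
by apply: eq_bigr => t _; rewrite mid_ins.
Qed.

Definition wprod (u : seq 'I_p) (w : seq 'I_m) : K := \prod_(x <- zip w u) M x.1 x.2.

Definition tpow n (x : tens K m n) : tens K p n :=
  [ffun u : word p n => \sum_(w : word m n) wprod u w * x w].

Lemma tpow_is_linear n : linear (@tpow n).
Proof.
move=> k x y; apply/ffunP => u; rewrite !ffunE scaler_sumr -big_split /=.
by apply: eq_bigr => w _; rewrite !ffunE mulrDr mulrCA.
Qed.

HB.instance Definition _ n :=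
  GRing.isLinear.Build K (tens K m n) (tens K p n) _ (@tpow n) (@tpow_is_linear n).

Definition tpow_lfun n : 'Hom(tens K m n, tens K p n) := linfun (@tpow n).

Lemma tpow_lfunE n x : tpow_lfun n x = tpow x.
Proof. exact: lfunE. Qed.

Lemma tpow_ev n (w : word m n) : tpow (ev K w) = [ffun u : word p n => wprod u w].
Proof. by apply/ffunP => u; rewrite [LHS]ffunE sum_mul_ev ffunE. Qed.

Lemma wprod_cat u1 u2 w1 w2 :
  size w1 = size u1 -> wprod (u1 ++ u2) (w1 ++ w2) = wprod u1 w1 * wprod u2 w2.
Proof. by move=> size_w1; rewrite /wprod zip_cat // big_cat. Qed.

Lemma wprod_split i u w : size w = size u ->
  wprod u w = wprod (take i u) (take i w) *
    wprod (take 2 (drop i u)) (take 2 (drop i w)) * wprod (drop i.+2 u) (drop i.+2 w).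
Proof.
move=> size_w; rewrite -{1}(cat_take_mid_drop u i) -{1}(cat_take_mid_drop w i).
by rewrite !wprod_cat ?mulrA // !size_take ?size_drop size_w.
Qed.

Lemma tpow_relvec n i c (r : tens K m 2) (u : word p n) :
  (i.+2 <= n)%N -> size c = (n - 2)%N ->
  tpow (relvec n i c r) u = wprod (take i u) (take i c) *
    wprod (drop i.+2 u) (drop i c) * \sum_(t : word m 2) wprod (take 2 (drop i u)) t * r t.
Proof.
move=> le_i_n size_c; under [X in _ * X]eq_bigr => t _ do rewrite -coef2_tuple.
rewrite -(sum_words_context (fun t => wprod (take 2 (drop i u)) t * coef2 r t) le_i_n size_c).
rewrite ffunE mulr_sumr; apply: eq_bigr => w _; rewrite ffunE.
case: eqP => [ctx_w | _]; last by rewrite !mul0r !mulr0.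
have size_take_w : size (take i w) = i by rewrite size_takel // size_tuple; lia.
rewrite (wprod_split i) ?size_tuple // -ctx_w take_size_cat // drop_size_cat //.
by rewrite !mul1r; ring.
Qed.

Lemma Ideal_sub_ker_tpow (R : {vspace tens K m 2}) n :
  (R <= lker (tpow_lfun 2))%VS -> (Ideal R n <= lker (tpow_lfun n))%VS.
Proof.
move=> R_ker; apply/subv_sumP => i _; apply/span_subvP => x.
case/allpairsP=> [[w r] [_ /vbasis_mem r_in_R ->]] /=.
have le_i_n : (i.+2 <= n)%N by have := ltn_ord i; lia.
rewrite memv_ker tpow_lfunE; apply/eqP/ffunP => u; rewrite [RHS]ffunE tpow_relvec //; last first.
  by rewrite size_cat size_takel ?size_drop ?size_tuple //; lia.
have size_mid : size (take 2 (drop i u)) == 2%N.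
  by rewrite size_takel // size_drop size_tuple; lia.
have := subvP R_ker _ r_in_R; rewrite memv_ker tpow_lfunE => /eqP/ffunP/(_ (Tuple size_mid)).
by rewrite !ffunE /= => ->; rewrite mulr0.
Qed.

Lemma wprod2 (a b : 'I_m) (q q' : 'I_p) : wprod [:: q; q'] [:: a; b] = M a q * M b q'.
Proof. by rewrite /wprod /= !big_cons big_nil mulr1. Qed.

Lemma tpow_comm_diff (a b c d : 'I_m) (q q' : 'I_p) :
  tpow (ev K [tuple a; b] - ev K [tuple b; a] - (ev K [tuple c; d] - ev K [tuple d; c]))
    [tuple q; q'] =
  M a q * M b q' - M b q * M a q' - (M c q * M d q' - M d q * M c q').
Proof. by rewrite !linearB /= !tpow_ev !ffunE /= !wprod2; ring. Qed.

Section RightInverse.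
Variables (e : 'I_p -> 'I_m) (Me : forall q q', M (e q) q' = (q == q')%:R).

Lemma wprod_map u v : size v = size u -> wprod u (map e v) = (u == v)%:R.
Proof.
elim: u v => [|a u IHu] [|b v] // size_v; first by rewrite /wprod big_nil.
rewrite /wprod /= big_cons -/(wprod u _) IHu; last by case: size_v.
by rewrite Me eqseq_cons eq_sym /=; case: (a == b); rewrite ?mul1r ?mul0r.
Qed.

Lemma limg_tpow n : limg (tpow_lfun n) = fullv.
Proof.
apply/vspaceP => y; rewrite memvf; apply/memv_imgP.
exists (\sum_(u : word p n) y u *: ev K [tuple of map e u]); rewrite ?memvf //.
rewrite tpow_lfunE linear_sum; apply/ffunP => v; rewrite sum_ffunE.
rewrite (bigD1 v) //= big1 => [|u /negbTE u_neq_v];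
  rewrite linearZ /= tpow_ev !ffunE wprod_map ?size_tuple //.
  by rewrite eqxx addr0 [RHS]mulr1.
by case: eqP => [/val_inj v_eq_u | _]; [rewrite v_eq_u eqxx in u_neq_v | rewrite [LHS]mulr0].
Qed.

Lemma dimA_ge (R : {vspace tens K m 2}) n :
  (R <= lker (tpow_lfun 2))%VS -> (p ^ n <= dimA R n)%N.
Proof.
move=> R_ker; have := limg_ker_dim (tpow_lfun n) fullv.
rewrite capfv limg_tpow dim_tens /dimA => <-.
by rewrite -addnBAC ?leq_addl // dimvS ?Ideal_sub_ker_tpow.
Qed.

End RightInverse.

End TensorPowerMap.

Lemma nab_eq i j : (i < 4)%N -> (j < 4)%N -> (nab i == nab j) = (i == j).
Proof. by move=> lt_i lt_j; rewrite -val_eqE /= !inordK. Qed.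

Lemma nab_cases (P : 'I_4 -> Prop) :
  P (nab 0) -> P (nab 1) -> P (nab 2) -> P (nab 3) -> forall a, P a.
Proof. by move=> P0 P1 P2 P3 a; rewrite -(inord_val a); case: a => [[|[|[|[|]]]]]. Qed.

Lemma mon2_nab a b i j : (i < 4)%N -> (j < 4)%N -> (a < 4)%N -> (b < 4)%N ->
  mon2 a b [tuple nab i; nab j] = ((i == a) && (j == b))%:R.
Proof. by move=> *; rewrite ffunE -val_eqE /= !eqseq_cons !nab_eq ?andbT. Qed.

Lemma comm_relE k l m t :
  comm_rel k l m t = mon2 0 k t - mon2 k 0 t - (mon2 l m t - mon2 m l t).
Proof. by rewrite !ffunE. Qed.

Lemma comm_rel_nab k l m i j :
    (i < 4)%N -> (j < 4)%N -> (k < 4)%N -> (l < 4)%N -> (m < 4)%N ->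
  comm_rel k l m [tuple nab i; nab j] =
    ((i == 0) && (j == k))%:R - ((i == k) && (j == 0))%:R -
    (((i == l) && (j == m))%:R - ((i == m) && (j == l))%:R).
Proof. by move=> *; rewrite comm_relE !mon2_nab. Qed.

Lemma comm_rel_diag k l m a : comm_rel k l m [tuple a; a] = 0.
Proof.
have mon2_swap p q : mon2 p q [tuple a; a] = mon2 q p [tuple a; a].
  by rewrite !ffunE -!val_eqE /= !eqseq_cons !andbT andbC.
by rewrite comm_relE (mon2_swap 0%N) (mon2_swap l) !subrr.
Qed.

Lemma Rplus_diag r a : r \in Rplus -> r [tuple a; a] = 0.
Proof. by move=> r_in; apply: (span3_coord_eq0 r_in); apply: comm_rel_diag. Qed.

Lemma Rplus_row r a : r \in Rplus -> (forall c, r [tuple a; c] = 0) -> r = 0.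
Proof.
move=> r_in; move: a; apply: nab_cases => row_eq0;
  [ apply: (span3_eq0 _ _ _ _ _ _ _ _ _ r_in (row_eq0 (nab 1)) (row_eq0 (nab 2)) (row_eq0 (nab 3)))
  | apply: (span3_eq0 _ _ _ _ _ _ _ _ _ r_in (row_eq0 (nab 0)) (row_eq0 (nab 3)) (row_eq0 (nab 2)))
  | apply: (span3_eq0 _ _ _ _ _ _ _ _ _ r_in (row_eq0 (nab 3)) (row_eq0 (nab 0)) (row_eq0 (nab 1)))
  | apply: (span3_eq0 _ _ _ _ _ _ _ _ _ r_in (row_eq0 (nab 2)) (row_eq0 (nab 1)) (row_eq0 (nab 0))) ];
  by rewrite comm_rel_nab //= ?(subrr, subr0, sub0r, opprK, oppr_eq0, oner_eq0).
Qed.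

Lemma dim_Rplus : \dim Rplus = 3%N.
Proof.
apply/eqP; apply: (@span3_free _ _ _ _ _ _ [tuple nab 0; nab 1] [tuple nab 0; nab 2] [tuple nab 0; nab 3]);
  by rewrite comm_rel_nab //= ?(subrr, subr0, sub0r, opprK, oppr_eq0, oner_eq0).
Qed.

Definition toFree2 (a : 'I_4) (q : 'I_2) : CC :=
  match nat_of_ord a, nat_of_ord q with
  | 0%N, 0%N | 1%N, 1%N => 1
  | 2%N, 0%N => 'i%C
  | 3%N, 1%N => - 'i%C
  | _, _ => 0
  end.

Lemma Rplus_sub_ker : (Rplus <= lker (tpow_lfun toFree2 2))%VS.
Proof.
have i2 : 'i%C * 'i%C = -1 :> CC by rewrite -expr2 sqr_i.
apply/span_subvP => v; rewrite !inE => /or3P[] /eqP ->;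
  rewrite memv_ker tpow_lfunE; apply/eqP/ffunP => u; rewrite [RHS]ffunE;
  case/tupleP: u => q u; case/tupleP: u => q' u; rewrite tuple0 tpow_comm_diff /toFree2 /nab !inordK //;
  by case: q => [[|[|//]] ?]; case: q' => [[|[|//]] ?] /=; ring: i2.
Qed.

Lemma toFree2_widen (q q' : 'I_2) : toFree2 (widen_ord (isT : (2 <= 4)%N) q) q' = (q == q')%:R.
Proof. by case: q => [[|[|//]] ?]; case: q' => [[|[|//]] ?]. Qed.

Theorem mainTheorem8 :
  exponential_growth (dimA Rplus) /\ ~ Gorenstein Rplus.
Proof.
split.
- exists 2; split => //; exists 0%N => n _.
  by rewrite -natrX ler_nat (dimA_ge toFree2_widen) // Rplus_sub_ker.
- apply: not_Gorenstein_of_Wsp3_eq0; last by rewrite dim_Rplus.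
  exact: Wsp3_eq0 Rplus_diag Rplus_row.
Qed.
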